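(* Let $K$ be a nonempty finite set and $X=\Delta(K)$. Let $u,v$ be probabilities on $X$ with finite supports $U$ and $V$ respectively. Then $$d_*(u,v)=\sup_{f\in D_1}|u(f)-v(f)|=\min_{(\alpha,\beta)\in\mathcal M_4(u,v)}\sum_{(x,y)\in U\times V}\|\alpha(x,y)\,x-\beta(x,y)\,y\|_1,$$ and the minimum is attained.
   Context: $X=\Delta(K)\subset\mathbb R^K$ with $\|p\|_1=\sum_k|p^k|$, and $u(f)=\sum_{x\in U}u(x)f(x)$. $D_1=\{f\in\mathcal C(X):\ \forall x,y\in X,\ \forall a,b\ge0,\ af(x)-bf(y)\le\|ax-by\|_1\}$. $\mathcal M_4(u,v)$ is the set of pairs $(\alpha,\beta)\in(\mathbb R_+^{U\times V})^2$ such that: - $\sum_{y'\in V}\alpha(x,y')=u(x)$ for all $x\in U$, and - $\sum_{x'\in U}\beta(x',y)=v(y)$ for all $y\in V$. *)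

From Stdlib Require Import Reals List.
Import ListNotations.
Open Scope R_scope.

(* K = {0, ..., n-1}; a point of R^K is represented by p : nat -> R,
   points of X = Delta(K) are required to vanish outside K so that
   equality of points is equality of functions. *)
Definition point := nat -> R.

Fixpoint rsum (n : nat) (f : nat -> R) : R :=
  match n with
  | O => 0
  | S m => rsum m f + f m
  end.

Definition lsum {A : Type} (l : list A) (f : A -> R) : R :=
  fold_right (fun a s => f a + s) 0 l.

Definition l1 (n : nat) (p : point) : R := rsum n (fun k => Rabs (p k)).

Definition inX (n : nat) (p : point) : Prop :=
  (forall k, (k < n)%nat -> 0 <= p k) /\
  (forall k, (n <= k)%nat -> p k = 0) /\
  rsum n p = 1.

Definition contX (n : nat) (f : point -> R) : Prop :=
  forall x, inX n x -> forall eps, 0 < eps ->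
    exists delta, 0 < delta /\
      forall y, inX n y -> l1 n (fun k => x k - y k) < delta ->
        Rabs (f x - f y) < eps.

Definition inD1 (n : nat) (f : point -> R) : Prop :=
  contX n f /\
  forall x y, inX n x -> inX n y -> forall a b, 0 <= a -> 0 <= b ->
    a * f x - b * f y <= l1 n (fun k => a * x k - b * y k).

Definition fin_prob (n : nat) (U : list point) (u : point -> R) : Prop :=
  NoDup U /\ (forall x, In x U -> inX n x /\ 0 < u x) /\ lsum U u = 1.

Definition integ (U : list point) (u : point -> R) (f : point -> R) : R :=
  lsum U (fun x => u x * f x).

Definition M4 (U V : list point) (u v : point -> R)
    (alpha beta : point -> point -> R) : Prop :=
  (forall x y, In x U -> In y V -> 0 <= alpha x y /\ 0 <= beta x y) /\
  (forall x, In x U -> lsum V (fun y => alpha x y) = u x) /\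
  (forall y, In y V -> lsum U (fun x => beta x y) = v y).

Definition cost (n : nat) (U V : list point)
    (alpha beta : point -> point -> R) : R :=
  lsum U (fun x => lsum V (fun y =>
    l1 n (fun k => alpha x y * x k - beta x y * y k))).

Definition dstar_is (n : nat) (U V : list point) (u v : point -> R) (d : R) : Prop :=
  is_lub (fun r => exists f, inD1 n f /\
                     r = Rabs (integ U u f - integ V v f)) d.

(* The inequality  |u(f) - v(f)| <= sum ||alpha(x,y) x - beta(x,y) y||_1  for f in D_1 and
   (alpha, beta) in M_4(u,v) is elementary (transport_bound).  For the converse we write
   the minimisation over M_4(u,v) as a finite linear program, whose variables are alpha,
   beta and slacks t(x,y,k) >= |alpha(x,y) x_k - beta(x,y) y_k|.  Both this program and its
   dual are feasible (product coupling, resp. an explicit dual point), so by strong duality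
   there are a primal solution and a dual solution with no duality gap.  The primal one is
   a transport pair; the dual one provides weights Lambda(x,y) in [-1,1]^K and potentials
   phi <= Lambda(x,y).x, Lambda(x,y).y <= psi, from which
   f = max_x min_y Lambda(x,y).(-) is a 1-Lipschitz, positively homogeneous function, hence
   in D_1, whose integral gap reaches the cost of the pair.  The common value is both the
   supremum defining d_* and the attained minimum over M_4(u,v). *)

From Stdlib Require Import Reals List Lra Lia ClassicalEpsilon Setoid Morphisms.
Import ListNotations.
Open Scope R_scope.

Definition dec {A : Type} (x y : A) : {x = y} + {x <> y} :=
  excluded_middle_informative (x = y).

Lemma dec_refl {A T : Type} (a : A) (x y : T) : (if dec a a then x else y) = x.
Proof. destruct (dec a a); congruence. Qed.

Section ListSums.
Context {A : Type}.
Implicit Types (l : list A) (f g : A -> R).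

Lemma lsum_nil f : lsum [] f = 0. Proof. reflexivity. Qed.
Lemma lsum_cons a l f : lsum (a :: l) f = f a + lsum l f. Proof. reflexivity. Qed.

Lemma lsum_app l1 l2 f : lsum (l1 ++ l2) f = lsum l1 f + lsum l2 f.
Proof. induction l1 as [|a l1 IH]; simpl; [lra | unfold lsum in *; simpl; rewrite IH; lra]. Qed.

Lemma lsum_ext l f g : (forall a, In a l -> f a = g a) -> lsum l f = lsum l g.
Proof.
  induction l as [|a l IH]; intros H; [reflexivity|].
  rewrite !lsum_cons, H, IH; auto; [intros; apply H|]; simpl; auto.
Qed.

Lemma lsum_le l f g : (forall a, In a l -> f a <= g a) -> lsum l f <= lsum l g.
Proof.
  induction l as [|a l IH]; intros H; rewrite ?lsum_cons; [apply Rle_refl|].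
  apply Rplus_le_compat; [apply H | apply IH; intros; apply H]; simpl; auto.
Qed.

Lemma lsum_plus l f g : lsum l (fun a => f a + g a) = lsum l f + lsum l g.
Proof. induction l; rewrite ?lsum_cons, ?lsum_nil; [lra | rewrite IHl; lra]. Qed.

Lemma lsum_scal l c f : lsum l (fun a => c * f a) = c * lsum l f.
Proof. induction l; rewrite ?lsum_cons, ?lsum_nil; [lra | rewrite IHl; lra]. Qed.

Lemma lsum_opp l f : lsum l (fun a => - f a) = - lsum l f.
Proof. induction l; rewrite ?lsum_cons, ?lsum_nil; [lra | rewrite IHl; lra]. Qed.

Lemma lsum_minus l f g : lsum l (fun a => f a - g a) = lsum l f - lsum l g.
Proof. induction l; rewrite ?lsum_cons, ?lsum_nil; [lra | rewrite IHl; lra]. Qed.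

Lemma lsum_0 l : lsum l (fun _ => 0) = 0.
Proof. induction l; rewrite ?lsum_cons, ?lsum_nil; [lra | rewrite IHl; lra]. Qed.

Lemma lsum_zero l f : (forall a, In a l -> f a = 0) -> lsum l f = 0.
Proof. intros H. rewrite (lsum_ext l f (fun _ => 0)) by exact H. apply lsum_0. Qed.

Lemma lsum_nonneg l f : (forall a, In a l -> 0 <= f a) -> 0 <= lsum l f.
Proof. intros H. rewrite <- (lsum_0 l). apply lsum_le; auto. Qed.

Lemma lsum_pick l a f : NoDup l -> In a l ->
  (forall b, In b l -> b <> a -> f b = 0) -> lsum l f = f a.
Proof.
  induction l as [|b l IH]; intros ND Ha Hz; [destruct Ha|].
  inversion ND as [|? ? Hb ND']; subst. rewrite lsum_cons. destruct Ha as [<-|Ha].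
  - rewrite lsum_zero; [ring|]. intros c Hc; apply Hz; [right | intros ->]; auto.
  - rewrite Hz, IH; auto; [ring | | left; auto | intros ->; auto].
    intros; apply Hz; [right|]; auto.
Qed.
End ListSums.

(* Side condition of [lsum_pick]: a term guarded by a failing equality test vanishes. *)
Ltac vanish := intros;
  first [ apply lsum_zero; vanish
        | repeat match goal with |- context [dec ?x ?y] => destruct (dec x y) end;
          subst; try congruence; ring ].

(* Enables [setoid_rewrite] under the binder of a sum. *)
#[export] Instance lsum_proper {T} (l : list T) :
  Proper (pointwise_relation T eq ==> eq) (lsum l).
Proof. intros f g H. apply lsum_ext; intros; apply H. Qed.

Lemma lsum_map {A B} (l : list A) (g : A -> B) (f : B -> R) :
  lsum (map g l) f = lsum l (fun a => f (g a)).
Proof. induction l; simpl map; rewrite ?lsum_cons, ?lsum_nil; [lra | rewrite IHl; lra]. Qed.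

Lemma lsum_flat_map {A B} (l : list A) (g : A -> list B) (f : B -> R) :
  lsum (flat_map g l) f = lsum l (fun a => lsum (g a) f).
Proof. induction l; simpl flat_map; rewrite ?lsum_cons, ?lsum_nil, ?lsum_app; [lra | rewrite IHl; lra]. Qed.

Lemma lsum_swap {A B} (l1 : list A) (l2 : list B) (f : A -> B -> R) :
  lsum l1 (fun a => lsum l2 (fun b => f a b)) = lsum l2 (fun b => lsum l1 (fun a => f a b)).
Proof.
  induction l1; rewrite ?lsum_cons, ?lsum_nil; [rewrite lsum_0; auto|].
  rewrite IHl1, <- lsum_plus. reflexivity.
Qed.

Lemma rsum_lsum n f : rsum n f = lsum (seq 0 n) f.
Proof.
  induction n; [reflexivity|].
  rewrite seq_S, lsum_app; simpl rsum. rewrite IHn, lsum_cons, lsum_nil. simpl. lra.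
Qed.

Section Farkas.
Context {J : Type}.

Definition cstr : Type := ((J -> R) * R)%type.
Definition lhs (Js : list J) (a x : J -> R) : R := lsum Js (fun j => a j * x j).
Definition sat (Js : list J) (x : J -> R) (c : cstr) : Prop := lhs Js (fst c) x <= snd c.

Inductive cone (S : list cstr) : cstr -> Prop :=
| cone_in c : In c S -> cone S c
| cone_scale c t : cone S c -> 0 <= t -> cone S (fun j => t * fst c j, t * snd c)
| cone_add c d : cone S c -> cone S d -> cone S (fun j => fst c j + fst d j, snd c + snd d).

Lemma cone_trans S S' c : (forall d, In d S' -> cone S d) -> cone S' c -> cone S c.
Proof. intros H D; induction D; [auto | apply cone_scale | apply cone_add]; auto. Qed.

Lemma cone_coeff_zero S j0 : (forall d, In d S -> fst d j0 = 0) ->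
  forall c, cone S c -> fst c j0 = 0.
Proof. intros H c D; induction D; simpl; auto; [rewrite IHD | rewrite IHD1, IHD2]; lra. Qed.

Definition update (x : J -> R) (j0 : J) (v : R) : J -> R :=
  fun j => if dec j j0 then v else x j.

Lemma lhs_update j0 Js a x v : ~ In j0 Js ->
  lhs (j0 :: Js) a (update x j0 v) = a j0 * v + lhs Js a x.
Proof.
  intros Hn. unfold lhs, update. rewrite lsum_cons. destruct (dec j0 j0) as [_|]; [|congruence].
  f_equal. apply lsum_ext. intros j Hj. destruct (dec j j0); subst; tauto.
Qed.

Lemma lhs_lin Js (a b : J -> R) s t x :
  lhs Js (fun j => s * a j + t * b j) x = s * lhs Js a x + t * lhs Js b x.
Proof. unfold lhs. rewrite <- !lsum_scal, <- lsum_plus. apply lsum_ext; intros; ring. Qed.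

(* Fourier-Motzkin elimination of the variable [j0]: keep the constraints not involving
   [j0], and combine each constraint with positive [j0]-coefficient with each one with
   negative [j0]-coefficient so that [j0] cancels. *)
Section Elimination.
Variable j0 : J.

Definition comb (p q : cstr) : cstr :=
  (fun j => (- fst q j0) * fst p j + fst p j0 * fst q j, (- fst q j0) * snd p + fst p j0 * snd q).

Definition fm_elim (S : list cstr) : list cstr :=
  filter (fun c => if Req_EM_T (fst c j0) 0 then true else false) S ++
  flat_map (fun p => map (comb p) (filter (fun q => if Rlt_dec (fst q j0) 0 then true else false) S))
           (filter (fun p => if Rlt_dec 0 (fst p j0) then true else false) S).

Lemma in_fm_elim S d : In d (fm_elim S) <->
  (In d S /\ fst d j0 = 0) \/
  (exists p q, In p S /\ 0 < fst p j0 /\ In q S /\ fst q j0 < 0 /\ d = comb p q).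
Proof.
  unfold fm_elim. rewrite in_app_iff, filter_In, in_flat_map.
  destruct (Req_EM_T (fst d j0) 0); split.
  - intros [H|[p [Hp Hd]]]; [tauto|right].
    rewrite filter_In in Hp. apply in_map_iff in Hd as [q [<- Hq]]. rewrite filter_In in Hq.
    destruct (Rlt_dec 0 (fst p j0)), (Rlt_dec (fst q j0) 0); intuition (try discriminate).
    exists p, q; auto.
  - intros [H|[p [q [Hp [Hp0 [Hq [Hq0 ->]]]]]]]; [tauto|right].
    exists p. rewrite filter_In. destruct (Rlt_dec 0 (fst p j0)); [|tauto].
    split; auto. apply in_map. rewrite filter_In. destruct (Rlt_dec (fst q j0) 0); tauto.
  - intros [H|[p [Hp Hd]]]; [intuition discriminate|right].
    rewrite filter_In in Hp. apply in_map_iff in Hd as [q [<- Hq]]. rewrite filter_In in Hq.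
    destruct (Rlt_dec 0 (fst p j0)), (Rlt_dec (fst q j0) 0); intuition (try discriminate).
    exists p, q; auto.
  - intros [H|[p [q [Hp [Hp0 [Hq [Hq0 ->]]]]]]]; [tauto|right].
    exists p. rewrite filter_In. destruct (Rlt_dec 0 (fst p j0)); [|tauto].
    split; auto. apply in_map. rewrite filter_In. destruct (Rlt_dec (fst q j0) 0); tauto.
Qed.

Lemma fm_elim_coeff S d : In d (fm_elim S) -> fst d j0 = 0.
Proof. rewrite in_fm_elim. intros [[_ H]|[p [q [_ [_ [_ [_ ->]]]]]]]; simpl; [auto | ring]. Qed.

Lemma fm_elim_cone S d : In d (fm_elim S) -> cone S d.
Proof.
  rewrite in_fm_elim. intros [[H _]|[p [q [Hp [Hp0 [Hq [Hq0 ->]]]]]]]; [now constructor|].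
  apply (cone_add S (fun j => (- fst q j0) * fst p j, (- fst q j0) * snd p)
                    (fun j => fst p j0 * fst q j, fst p j0 * snd q));
    [apply (cone_scale S p) | apply (cone_scale S q)]; try constructor; auto; lra.
Qed.
End Elimination.
End Farkas.

Lemma find_between {A} (N P : list A) (lo hi : A -> R) :
  (forall q p, In q N -> In p P -> lo q <= hi p) ->
  exists v, (forall q, In q N -> lo q <= v) /\ (forall p, In p P -> v <= hi p).
Proof.
  induction N as [|a N IH]; intros H.
  - assert (Hlow : exists v, forall p, In p P -> v <= hi p).
    { clear H. induction P as [|b P [v Hv]]; [exists 0; intros ? []|].
      exists (Rmin (hi b) v).
      intros p [<-|Hp]; [apply Rmin_l | eapply Rle_trans; [apply Rmin_r | apply Hv; auto]]. }
    destruct Hlow as [v Hv]. exists v. split; [intros ? []|exact Hv].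
  - destruct IH as [v [H1 H2]]; [intros; apply H; simpl; auto|].
    exists (Rmax (lo a) v). split.
    + intros q [<-|Hq]; [apply Rmax_l | eapply Rle_trans; [apply H1; auto | apply Rmax_r]].
    + intros p Hp. apply Rmax_lub; [apply H; simpl|]; auto.
Qed.

(* Arithmetic behind one elimination step: the combination of a constraint with positive
   coefficient [ap] and one with negative coefficient [aq] says exactly that the bound
   imposed by the second lies below the bound imposed by the first. *)
Lemma comb_bounds ap aq Lp Lq bp bq : 0 < ap -> aq < 0 ->
  - aq * Lp + ap * Lq <= - aq * bp + ap * bq -> (bq - Lq) / aq <= (bp - Lp) / ap.
Proof.
  intros Hp Hq H. apply (Rmult_le_reg_l (ap * - aq)); [nra|].
  replace (ap * - aq * ((bq - Lq) / aq)) with (- ap * (bq - Lq)) by (field; lra).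
  replace (ap * - aq * ((bp - Lp) / ap)) with (- aq * (bp - Lp)) by (field; lra). lra.
Qed.

Lemma solve_bound a L b v :
  (a < 0 /\ (b - L) / a <= v) \/ (0 < a /\ v <= (b - L) / a) -> a * v + L <= b.
Proof.
  intros [[Ha Hv]|[Ha Hv]].
  - assert (a * v <= a * ((b - L) / a)) by (apply Rmult_le_compat_neg_l; lra).
    replace (a * ((b - L) / a)) with (b - L) in H by (field; lra). lra.
  - assert (a * v <= a * ((b - L) / a)) by (apply Rmult_le_compat_l; lra).
    replace (a * ((b - L) / a)) with (b - L) in H by (field; lra). lra.
Qed.

Section Lift.
Context {J : Type} (j0 : J) (Js : list J).
Hypothesis j0_fresh : ~ In j0 Js.

Lemma fm_elim_lift S x' : (forall c, In c (fm_elim j0 S) -> sat Js x' c) ->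
  exists v, forall c, In c S -> sat (j0 :: Js) (update x' j0 v) c.
Proof.
  intros Hx'. set (L := fun c : cstr => lhs Js (fst c) x').
  set (bound := fun c : cstr => (snd c - L c) / fst c j0).
  destruct (find_between (filter (fun q => if Rlt_dec (fst q j0) 0 then true else false) S)
                         (filter (fun p => if Rlt_dec 0 (fst p j0) then true else false) S)
                         bound bound) as [v [Hlo Hhi]].
  { intros q p Hq Hp. rewrite filter_In in Hq, Hp.
    destruct Hq as [Hq Hq0], Hp as [Hp Hp0].
    destruct (Rlt_dec (fst q j0) 0), (Rlt_dec 0 (fst p j0)); try discriminate.
    apply comb_bounds; auto.
    assert (Hc : sat Js x' (comb j0 p q)) by (apply Hx', in_fm_elim; right; exists p, q; auto).
    unfold sat, comb in Hc; simpl in Hc. rewrite lhs_lin in Hc. exact Hc. }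
  exists v. intros c Hc. unfold sat. rewrite lhs_update by exact j0_fresh. fold (L c).
  destruct (total_order_T (fst c j0) 0) as [[Hneg|Hzero]|Hpos].
  - apply solve_bound. left. split; auto. apply Hlo, filter_In.
    destruct (Rlt_dec (fst c j0) 0); tauto.
  - rewrite Hzero, Rmult_0_l, Rplus_0_l. apply Hx', in_fm_elim. left; auto.
  - apply solve_bound. right. split; auto. apply Hhi, filter_In.
    destruct (Rlt_dec 0 (fst c j0)); tauto.
Qed.
End Lift.

(* Proved by
   Fourier-Motzkin elimination, one variable at a time. *)
Theorem farkas {J} (Js : list J) : NoDup Js -> forall S : list (cstr (J:=J)),
  (exists x, forall c, In c S -> sat Js x c) \/
  (exists c, cone S c /\ (forall j, In j Js -> fst c j = 0) /\ snd c < 0).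
Proof.
  induction Js as [|j0 Js IH]; intros ND S.
  - destruct (classic (exists c, In c S /\ snd c < 0)) as [[c [Hc Hn]]|Hn].
    + right. exists c. split; [constructor; auto | split; [intros j []|auto]].
    + left. exists (fun _ => 0). intros c Hc. unfold sat, lhs. rewrite lsum_nil.
      destruct (Rle_dec 0 (snd c)); auto. exfalso; apply Hn; exists c; split; auto; lra.
  - inversion ND as [|? ? Hfresh ND']; subst.
    destruct (IH ND' (fm_elim j0 S)) as [[x' Hx']|[c [Hc [Hc0 Hcn]]]].
    + left. destruct (fm_elim_lift j0 Js Hfresh S x' Hx') as [v Hv]. eauto.
    + right. exists c. split; [|split; auto].
      * eapply cone_trans; [|exact Hc]. apply fm_elim_cone.
      * intros j [<-|Hj]; auto. apply (cone_coeff_zero (fm_elim j0 S)); auto.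
        apply fm_elim_coeff.
Qed.

Lemma cone_mult {J K} (Ks : list K) (F : K -> cstr (J:=J)) : NoDup Ks -> forall c,
  cone (map F Ks) c -> exists lam : K -> R, (forall k, In k Ks -> 0 <= lam k) /\
    (forall j, fst c j = lsum Ks (fun k => lam k * fst (F k) j)) /\
    snd c = lsum Ks (fun k => lam k * snd (F k)).
Proof.
  intros ND c D.
  induction D as [c Hc|c t D [lam [H0 [H1 H2]]] Ht|c d Dc [l1 [H0 [H1 H2]]] Dd [l2 [G0 [G1 G2]]]].
  - apply in_map_iff in Hc as [k0 [<- Hk0]].
    exists (fun k => if dec k k0 then 1 else 0). split; [intros k _; destruct (dec k k0); lra|].
    split; [intros j|]; rewrite (lsum_pick Ks k0), dec_refl by first [assumption | vanish]; ring.
  - exists (fun k => t * lam k). split; [intros; apply Rmult_le_pos; auto|].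
    split; [intros j; simpl; rewrite H1 | simpl; rewrite H2];
      rewrite <- lsum_scal; apply lsum_ext; intros; ring.
  - exists (fun k => l1 k + l2 k). split; [intros k Hk; specialize (H0 k Hk); specialize (G0 k Hk); lra|].
    split; [intros j; simpl; rewrite H1, G1 | simpl; rewrite H2, G2];
      rewrite <- lsum_plus; apply lsum_ext; intros; ring.
Qed.

Corollary farkas_mult {J K} (Js : list J) (Ks : list K) (F : K -> cstr (J:=J)) :
  NoDup Js -> NoDup Ks ->
  (exists x, forall k, In k Ks -> sat Js x (F k)) \/
  (exists lam : K -> R, (forall k, In k Ks -> 0 <= lam k) /\
    (forall j, In j Js -> lsum Ks (fun k => lam k * fst (F k) j) = 0) /\
    lsum Ks (fun k => lam k * snd (F k)) < 0).
Proof.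
  intros NDJ NDK. destruct (farkas Js NDJ (map F Ks)) as [[x Hx]|[c [Hc [Hc0 Hcn]]]].
  - left. exists x. intros k Hk. apply Hx, in_map; auto.
  - right. destruct (cone_mult Ks F NDK c Hc) as [lam [H0 [H1 H2]]].
    exists lam. split; [auto | split; [intros j Hj; rewrite <- H1|rewrite <- H2]; auto].
Qed.

Lemma NoDup_flat_map {A B} (g : A -> list B) l : NoDup l -> (forall a, In a l -> NoDup (g a)) ->
  (forall a a' z, In a l -> In a' l -> a <> a' -> In z (g a) -> ~ In z (g a')) ->
  NoDup (flat_map g l).
Proof.
  induction l as [|a l IH]; intros ND H1 H2; simpl; [constructor|].
  inversion ND as [|? ? Ha ND']; subst. apply NoDup_app.
  - apply H1; left; auto.
  - apply IH; auto; [intros; apply H1; right; auto|].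
    intros b b' z Hb Hb' Hne. apply H2; try right; auto.
  - intros z Hz Hz'. apply in_flat_map in Hz' as [a' [Ha' Hz']].
    apply (H2 a a' z); simpl; auto. intros ->; auto.
Qed.

Lemma NoDup_map_inj {A B} (f : A -> B) l :
  (forall a a', f a = f a' -> a = a') -> NoDup l -> NoDup (map f l).
Proof. intros H ND. apply NoDup_map_NoDup_ForallPairs; auto. intros a a' _ _; auto. Qed.

Ltac unpack_in := repeat match goal with
  | H : In _ (_ ++ _) |- _ => apply in_app_iff in H; destruct H as [H|H]
  | H : In _ (flat_map _ _) |- _ => apply in_flat_map in H; destruct H as [? [? H]]
  | H : In _ (map _ _) |- _ => apply in_map_iff in H; destruct H as [? [? H]]
  | H : In _ [_] |- _ => destruct H as [H|[]]
  end.

Ltac solve_nodup := repeat match goal with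
  | |- NoDup (_ ++ _) => apply NoDup_app
  | |- NoDup (flat_map _ _) => apply NoDup_flat_map
  | |- NoDup (map _ _) => apply NoDup_map_inj; [intros ? ? E; inversion E; auto|]
  | |- NoDup [_] => constructor; [intros []|constructor]
  | |- NoDup (seq _ _) => apply seq_NoDup
  | |- NoDup _ => assumption
  | |- forall a, In a _ -> NoDup _ => intros
  | |- forall a a' z, _ -> _ -> _ -> _ -> ~ _ =>
      let H := fresh in intros ? ? ? ? ? ? ? H; unpack_in; subst; congruence
  | |- forall a, In a _ -> ~ In a _ =>
      let H := fresh in let H' := fresh in intros ? H H'; unpack_in; subst; congruence
  end.

(* Linear programming duality for the pair of programs
     (P)  minimise  c . x  subject to  A x <= b,
     (D)  maximise -b . y  subject to  y >= 0,  A^T y + c = 0. *)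
Section LinearProgramming.
Context {J I : Type} (Js : list J) (Is : list I) (A : I -> J -> R) (b : I -> R) (c : J -> R).
Hypothesis NDJ : NoDup Js.
Hypothesis NDI : NoDup Is.

Definition row (i : I) (x : J -> R) : R := lsum Js (fun j => A i j * x j).
Definition col (j : J) (y : I -> R) : R := lsum Is (fun i => y i * A i j).
Definition pfeas (x : J -> R) : Prop := forall i, In i Is -> row i x <= b i.
Definition dfeas (y : I -> R) : Prop :=
  (forall i, In i Is -> 0 <= y i) /\ (forall j, In j Js -> col j y + c j = 0).
Definition cobj (x : J -> R) : R := lsum Js (fun j => c j * x j).
Definition bobj (y : I -> R) : R := lsum Is (fun i => b i * y i).

Lemma row_col_pairing x y :
  lsum Is (fun i => y i * row i x) = lsum Js (fun j => col j y * x j).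
Proof.
  unfold row, col. setoid_rewrite <- lsum_scal. rewrite lsum_swap.
  apply lsum_ext; intros j _. rewrite Rmult_comm, <- lsum_scal. apply lsum_ext; intros; ring.
Qed.

Lemma row_lin i s t x x' : row i (fun j => s * x j + t * x' j) = s * row i x + t * row i x'.
Proof. unfold row. rewrite <- !lsum_scal, <- lsum_plus. apply lsum_ext; intros; ring. Qed.

Lemma col_scal j s y : col j (fun i => s * y i) = s * col j y.
Proof. unfold col. rewrite <- lsum_scal. apply lsum_ext; intros; ring. Qed.

Lemma cobj_lin s t x x' : cobj (fun j => s * x j + t * x' j) = s * cobj x + t * cobj x'.
Proof. unfold cobj. rewrite <- !lsum_scal, <- lsum_plus. apply lsum_ext; intros; ring. Qed.

Lemma bobj_scal s y : bobj (fun i => s * y i) = s * bobj y.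
Proof. unfold bobj. rewrite <- lsum_scal. apply lsum_ext; intros; ring. Qed.

Lemma weak_lp x y : pfeas x -> dfeas y -> 0 <= cobj x + bobj y.
Proof.
  intros Hx [Hy0 Hy]. unfold cobj.
  rewrite (lsum_ext Js _ (fun j => - (col j y * x j)))
    by (intros j Hj; replace (c j) with (- col j y) by (specialize (Hy j Hj); lra); ring).
  rewrite lsum_opp, <- row_col_pairing. unfold bobj. rewrite <- lsum_opp, <- lsum_plus.
  apply lsum_nonneg. intros i Hi. specialize (Hx i Hi). specialize (Hy0 i Hi). nra.
Qed.

Section Certificates.
Variables (x0 : J -> R) (y0 : I -> R).
Hypothesis Hx0 : pfeas x0.
Hypothesis Hy0 : dfeas y0.

(* When both programs are feasible there is no Farkas certificate [(mu, w, tau)] against a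
   zero duality gap.  For [tau > 0] it rescales to a pair of feasible solutions with negative
   gap; for [tau = 0] it is a direction along which the primal objective is unbounded
   (or it contradicts primal feasibility). *)
Lemma no_gap_certificate (mu nu : I -> R) (w : J -> R) (tau : R) :
  (forall i, In i Is -> 0 <= mu i) -> (forall i, In i Is -> 0 <= nu i) -> 0 <= tau ->
  (forall j, In j Js -> col j mu + tau * c j = 0) ->
  (forall i, In i Is -> row i w + tau * b i = nu i) ->
  bobj mu < cobj w -> False.
Proof.
  intros Hmu Hnu Htau Hcol Hrow Hgap. destruct Htau as [Htau|<-].
  - assert (Hinv : 0 < / tau) by (apply Rinv_0_lt_compat; lra).
    assert (Hweak : 0 <= cobj (fun j => - / tau * w j + 0 * x0 j) + bobj (fun i => / tau * mu i)).
    { apply weak_lp.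
      - intros i Hi. rewrite row_lin. specialize (Hrow i Hi). specialize (Hnu i Hi).
        replace (row i w) with (nu i - tau * b i) by lra.
        replace (- / tau * (nu i - tau * b i)) with (b i - / tau * nu i) by (field; lra).
        assert (0 <= / tau * nu i) by (apply Rmult_le_pos; lra). lra.
      - split; [intros i Hi; apply Rmult_le_pos; [lra | auto]|].
        intros j Hj. rewrite col_scal. specialize (Hcol j Hj).
        replace (col j mu) with (- (tau * c j)) by lra. field; lra. }
    rewrite cobj_lin, bobj_scal in Hweak.
    assert (/ tau * (bobj mu - cobj w) < 0) by (apply Rmult_pos_neg; lra). lra.
  - destruct (Rlt_or_le (bobj mu) 0) as [Hb|Hb].
    + (* [mu] certifies infeasibility of (P), contradicting [x0]. *)
      assert (Hpair : lsum Is (fun i => mu i * row i x0) = 0).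
      { rewrite row_col_pairing. apply lsum_zero. intros j Hj.
        specialize (Hcol j Hj). rewrite Rmult_0_l, Rplus_0_r in Hcol. rewrite Hcol. ring. }
      assert (lsum Is (fun i => mu i * row i x0) <= bobj mu).
      { apply lsum_le. intros i Hi. rewrite Rmult_comm. apply Rmult_le_compat_r; auto. }
      lra.
    + (* [-w] is a feasible direction of (P) along which [c . x] decreases. *)
      set (s := (cobj x0 + bobj y0 + 1) / cobj w).
      assert (Hs : 0 <= s).
      { unfold s. pose proof (weak_lp x0 y0 Hx0 Hy0).
        apply Rmult_le_pos; [lra | left; apply Rinv_0_lt_compat; lra]. }
      assert (Hweak : 0 <= cobj (fun j => 1 * x0 j + - s * w j) + bobj y0).
      { apply weak_lp; auto. intros i Hi. rewrite row_lin.
        specialize (Hrow i Hi). specialize (Hnu i Hi). specialize (Hx0 i Hi). nra. }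
      rewrite cobj_lin in Hweak.
      assert (s * cobj w = cobj x0 + bobj y0 + 1) by (unfold s; field; lra).
      lra.
Qed.

(* Strong duality is the solvability of the following system in [(x, y)]:
   [A x <= b], [y >= 0], [A^T y + c = 0] and [c . x + b . y <= 0]. *)
Inductive gap_var := GX (j : J) | GY (i : I).
Inductive gap_cstr := GPrimal (i : I) | GSign (i : I) | GDualLe (j : J) | GDualGe (j : J) | GGap.

Definition gap_system (k : gap_cstr) : cstr (J:=gap_var) :=
  match k with
  | GPrimal i => (fun v => match v with GX j => A i j | GY _ => 0 end, b i)
  | GSign i => (fun v => match v with GY i' => if dec i' i then -1 else 0 | GX _ => 0 end, 0)
  | GDualLe j => (fun v => match v with GY i => A i j | GX _ => 0 end, - c j)
  | GDualGe j => (fun v => match v with GY i => - A i j | GX _ => 0 end, c j)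
  | GGap => (fun v => match v with GX j => c j | GY i => b i end, 0)
  end.

Definition gap_vars : list gap_var := map GX Js ++ map GY Is.
Definition gap_cstrs : list gap_cstr :=
  map GPrimal Is ++ map GSign Is ++ map GDualLe Js ++ map GDualGe Js ++ [GGap].

Lemma lsum_gap_vars (f : gap_var -> R) :
  lsum gap_vars f = lsum Js (fun j => f (GX j)) + lsum Is (fun i => f (GY i)).
Proof. unfold gap_vars. rewrite lsum_app, !lsum_map. reflexivity. Qed.

Lemma lsum_gap_cstrs (f : gap_cstr -> R) : lsum gap_cstrs f =
  lsum Is (fun i => f (GPrimal i)) + lsum Is (fun i => f (GSign i)) +
  lsum Js (fun j => f (GDualLe j)) + lsum Js (fun j => f (GDualGe j)) + f GGap.
Proof. unfold gap_cstrs. rewrite !lsum_app, !lsum_map, lsum_cons, lsum_nil. ring. Qed.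

Lemma in_gap_cstrs k :
  match k with
  | GPrimal i | GSign i => In i Is
  | GDualLe j | GDualGe j => In j Js
  | GGap => True
  end -> In k gap_cstrs.
Proof.
  unfold gap_cstrs. intros H. rewrite !in_app_iff.
  destruct k; [left | right; left | do 2 right; left | do 3 right; left | do 4 right; left];
    simpl; auto using in_map.
Qed.

Lemma in_gap_vars v :
  match v with GX j => In j Js | GY i => In i Is end -> In v gap_vars.
Proof. unfold gap_vars. intros H. rewrite in_app_iff. destruct v; [left|right]; auto using in_map. Qed.

Lemma NoDup_gap_vars : NoDup gap_vars.
Proof. unfold gap_vars. solve_nodup. Qed.

Lemma NoDup_gap_cstrs : NoDup gap_cstrs.
Proof. unfold gap_cstrs. solve_nodup. Qed.

Ltac simpl_gap H := cbn [gap_system fst snd] in H;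
  repeat first [setoid_rewrite Rmult_0_l in H | setoid_rewrite Rmult_0_r in H]; rewrite ?lsum_0 in H.

Lemma gap_solution z : (forall k, In k gap_cstrs -> sat gap_vars z (gap_system k)) ->
  pfeas (fun j => z (GX j)) /\ dfeas (fun i => z (GY i)) /\
  cobj (fun j => z (GX j)) + bobj (fun i => z (GY i)) <= 0.
Proof.
  intros Hz.
  assert (Hsat : forall k, In k gap_cstrs ->
    lsum Js (fun j => fst (gap_system k) (GX j) * z (GX j)) +
    lsum Is (fun i => fst (gap_system k) (GY i) * z (GY i)) <= snd (gap_system k)).
  { intros k Hk. specialize (Hz k Hk). unfold sat, lhs in Hz. rewrite lsum_gap_vars in Hz. exact Hz. }
  split; [|split; [split|]].
  - intros i Hi. specialize (Hsat (GPrimal i) (in_gap_cstrs (GPrimal i) Hi)). simpl_gap Hsat.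
    unfold row. lra.
  - intros i Hi. specialize (Hsat (GSign i) (in_gap_cstrs (GSign i) Hi)). simpl_gap Hsat.
    rewrite (lsum_pick Is i), dec_refl in Hsat by first [assumption | vanish]. lra.
  - intros j Hj. pose proof (Hle := Hsat (GDualLe j) (in_gap_cstrs (GDualLe j) Hj)).
    pose proof (Hge := Hsat (GDualGe j) (in_gap_cstrs (GDualGe j) Hj)).
    simpl_gap Hle. simpl_gap Hge. unfold col.
    rewrite (lsum_ext Is (fun i => - A i j * z (GY i)) (fun i => - (A i j * z (GY i)))) in Hge
      by (intros; ring).
    rewrite lsum_opp in Hge.
    rewrite (lsum_ext Is (fun i => z (GY i) * A i j) (fun i => A i j * z (GY i))) by (intros; ring).
    lra.
  - specialize (Hsat GGap (in_gap_cstrs GGap Logic.I)). simpl_gap Hsat. exact Hsat.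
Qed.

Lemma gap_system_no_certificate (lam : gap_cstr -> R) :
  (forall k, In k gap_cstrs -> 0 <= lam k) ->
  (forall v, In v gap_vars -> lsum gap_cstrs (fun k => lam k * fst (gap_system k) v) = 0) ->
  lsum gap_cstrs (fun k => lam k * snd (gap_system k)) < 0 -> False.
Proof.
  intros Hlam Hcoeff Hrhs.
  apply (no_gap_certificate (fun i => lam (GPrimal i)) (fun i => lam (GSign i))
           (fun j => lam (GDualLe j) - lam (GDualGe j)) (lam GGap)).
  - intros i Hi. apply Hlam, (in_gap_cstrs (GPrimal i)), Hi.
  - intros i Hi. apply Hlam, (in_gap_cstrs (GSign i)), Hi.
  - apply Hlam, (in_gap_cstrs GGap), Logic.I.
  - intros j Hj. specialize (Hcoeff (GX j) (in_gap_vars (GX j) Hj)).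
    rewrite lsum_gap_cstrs in Hcoeff. simpl_gap Hcoeff.
    unfold col. lra.
  - intros i Hi. specialize (Hcoeff (GY i) (in_gap_vars (GY i) Hi)).
    rewrite lsum_gap_cstrs in Hcoeff. simpl_gap Hcoeff.
    rewrite (lsum_pick Is i), dec_refl in Hcoeff by first [assumption | vanish].
    unfold row. rewrite (lsum_ext Js _ (fun j => lam (GDualLe j) * A i j - lam (GDualGe j) * A i j))
      by (intros; ring).
    rewrite (lsum_ext Js (fun j => lam (GDualGe j) * - A i j) (fun j => - (lam (GDualGe j) * A i j)))
      in Hcoeff by (intros; ring).
    rewrite lsum_minus. rewrite lsum_opp in Hcoeff. lra.
  - rewrite lsum_gap_cstrs in Hrhs. simpl_gap Hrhs.
    unfold bobj, cobj.
    rewrite (lsum_ext Js _ (fun j => lam (GDualLe j) * c j - lam (GDualGe j) * c j)) by (intros; ring).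
    rewrite (lsum_ext Is _ (fun i => lam (GPrimal i) * b i)) by (intros; ring).
    rewrite (lsum_ext Js (fun j => lam (GDualLe j) * - c j) (fun j => - (lam (GDualLe j) * c j)))
      in Hrhs by (intros; ring).
    rewrite lsum_minus. rewrite lsum_opp in Hrhs. lra.
Qed.

Theorem strong_lp : exists x y, pfeas x /\ dfeas y /\ cobj x + bobj y <= 0.
Proof.
  destruct (farkas_mult gap_vars gap_cstrs gap_system NoDup_gap_vars NoDup_gap_cstrs)
    as [[z Hz]|[lam [Hlam [Hcoeff Hrhs]]]].
  - exists (fun j => z (GX j)), (fun i => z (GY i)). apply gap_solution, Hz.
  - exfalso. exact (gap_system_no_certificate lam Hlam Hcoeff Hrhs).
Qed.
End Certificates.
End LinearProgramming.

Section LipschitzHomogeneous.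
Variable n : nat.

Definition lip_hom (g : point -> R) : Prop :=
  (forall p q, g p - g q <= l1 n (fun k => p k - q k)) /\
  (forall a p, 0 <= a -> g (fun k => a * p k) = a * g p).

Lemma l1_diff_sym p q : l1 n (fun k => p k - q k) = l1 n (fun k => q k - p k).
Proof. unfold l1. rewrite !rsum_lsum. apply lsum_ext; intros. apply Rabs_minus_sym. Qed.

Lemma lip_hom_D1 g : lip_hom g -> inD1 n g.
Proof.
  intros [Hlip Hhom]. split.
  - intros x _ eps Heps. exists eps. split; auto. intros y _ Hxy.
    apply (Rle_lt_trans _ (l1 n (fun k => x k - y k))); auto. apply Rabs_le.
    pose proof (Hlip y x). rewrite l1_diff_sym in H. pose proof (Hlip x y). lra.
  - intros x y _ _ a b Ha Hb. rewrite <- (Hhom a x Ha), <- (Hhom b y Hb). apply Hlip.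
Qed.

Definition lin (lam : nat -> R) (p : point) : R := rsum n (fun k => lam k * p k).

Lemma lip_hom_lin lam : (forall k, (k < n)%nat -> Rabs (lam k) <= 1) -> lip_hom (lin lam).
Proof.
  intros H. split.
  - intros p q. unfold lin, l1. rewrite !rsum_lsum, <- lsum_minus. apply lsum_le.
    intros k Hk. apply in_seq in Hk. specialize (H k ltac:(lia)).
    replace (lam k * p k - lam k * q k) with (lam k * (p k - q k)) by ring.
    eapply Rle_trans; [apply Rle_abs|]. rewrite Rabs_mult.
    rewrite <- (Rmult_1_l (Rabs (p k - q k))) at 2. apply Rmult_le_compat_r; auto. apply Rabs_pos.
  - intros a p Ha. unfold lin. rewrite !rsum_lsum, <- lsum_scal. apply lsum_ext; intros; ring.
Qed.

Lemma lip_hom_opp g : lip_hom g -> lip_hom (fun p => - g p).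
Proof.
  intros [Hlip Hhom]. split.
  - intros p q. rewrite l1_diff_sym. specialize (Hlip q p). lra.
  - intros a p Ha. rewrite Hhom by exact Ha. ring.
Qed.

Lemma lip_hom_max g1 g2 : lip_hom g1 -> lip_hom g2 -> lip_hom (fun p => Rmax (g1 p) (g2 p)).
Proof.
  intros [Hlip1 Hhom1] [Hlip2 Hhom2]. split.
  - intros p q. specialize (Hlip1 p q). specialize (Hlip2 p q).
    unfold Rmax. destruct (Rle_dec (g1 p) (g2 p)), (Rle_dec (g1 q) (g2 q)); lra.
  - intros a p Ha. rewrite Hhom1, Hhom2 by exact Ha. apply RmaxRmult, Ha.
Qed.

Definition lmax {A} (G : A -> point -> R) (a0 : A) (l : list A) (p : point) : R :=
  fold_right (fun a m => Rmax (G a p) m) (G a0 p) l.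
Definition lmin {A} (G : A -> point -> R) (a0 : A) (l : list A) (p : point) : R :=
  - lmax (fun a p => - G a p) a0 l p.

Lemma lip_hom_lmax {A} (G : A -> point -> R) a0 l :
  (forall a, In a (a0 :: l) -> lip_hom (G a)) -> lip_hom (lmax G a0 l).
Proof.
  induction l as [|a l IH]; intros H; [apply H; left; auto|].
  apply (lip_hom_max (G a) (lmax G a0 l)); [apply H; simpl; auto|].
  apply IH. intros a' [<-|Ha']; apply H; simpl; auto.
Qed.

Lemma lip_hom_lmin {A} (G : A -> point -> R) a0 l :
  (forall a, In a (a0 :: l) -> lip_hom (G a)) -> lip_hom (lmin G a0 l).
Proof.
  intros H. apply (lip_hom_opp (lmax (fun a p => - G a p) a0 l)), lip_hom_lmax.
  intros a Ha. apply lip_hom_opp, H, Ha.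
Qed.
End LipschitzHomogeneous.

Lemma lmax_ge {A} (G : A -> point -> R) a0 l p a : In a l -> G a p <= lmax G a0 l p.
Proof.
  induction l as [|b l IH]; intros Hin; [destruct Hin|]; destruct Hin as [<-|Ha]; simpl;
    [apply Rmax_l|].
  eapply Rle_trans; [apply IH, Ha | apply Rmax_r].
Qed.

Lemma lmax_le {A} (G : A -> point -> R) a0 l p M :
  (forall a, In a (a0 :: l) -> G a p <= M) -> lmax G a0 l p <= M.
Proof.
  induction l as [|b l IH]; intros H; simpl; [apply H; left; auto|].
  apply Rmax_lub; [apply H; simpl; auto|]. apply IH. intros a [<-|Ha]; apply H; simpl; auto.
Qed.

Lemma lmin_le {A} (G : A -> point -> R) a0 l p a : In a l -> lmin G a0 l p <= G a p.
Proof. intros Ha. unfold lmin. pose proof (lmax_ge (fun a p => - G a p) a0 l p a Ha). lra. Qed.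

Lemma lmin_ge {A} (G : A -> point -> R) a0 l p M :
  (forall a, In a (a0 :: l) -> M <= G a p) -> M <= lmin G a0 l p.
Proof.
  intros H. unfold lmin. enough (lmax (fun a p => - G a p) a0 l p <= - M) by lra.
  apply lmax_le. intros a Ha. specialize (H a Ha). lra.
Qed.

Lemma transport_bound n U V u v alpha beta f :
  (forall x, In x U -> inX n x) -> (forall y, In y V -> inX n y) ->
  inD1 n f -> M4 U V u v alpha beta ->
  Rabs (integ U u f - integ V v f) <= cost n U V alpha beta.
Proof.
  intros HU HV [_ Hf] [Hnn [Halpha Hbeta]].
  assert (E : integ U u f - integ V v f =
              lsum U (fun x => lsum V (fun y => alpha x y * f x - beta x y * f y))).
  { setoid_rewrite lsum_minus. rewrite lsum_minus. unfold integ. f_equal.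
    - apply lsum_ext. intros x Hx. rewrite <- Halpha by exact Hx.
      rewrite Rmult_comm, <- lsum_scal. apply lsum_ext; intros; ring.
    - rewrite lsum_swap. apply lsum_ext. intros y Hy. rewrite <- Hbeta by exact Hy.
      rewrite Rmult_comm, <- lsum_scal. apply lsum_ext; intros; ring. }
  rewrite E. unfold cost. apply Rabs_le. split.
  - rewrite <- lsum_opp. apply lsum_le. intros x Hx. rewrite <- lsum_opp. apply lsum_le.
    intros y Hy. destruct (Hnn x y Hx Hy) as [Ha Hb].
    assert (beta x y * f y - alpha x y * f x <= l1 n (fun k => beta x y * y k - alpha x y * x k))
      by (apply Hf; auto).
    rewrite (l1_diff_sym n (fun k => beta x y * y k) (fun k => alpha x y * x k)) in H. lra.
  - apply lsum_le. intros x Hx. apply lsum_le. intros y Hy.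
    destruct (Hnn x y Hx Hy). apply Hf; auto.
Qed.

(* Variables: [alpha x y], [beta x y] and slacks
   [t x y k >= |alpha x y * x k - beta x y * y k|]; objective: the sum of the slacks;
   constraints: nonnegativity, the two slack inequalities, and the marginal equations of
   M_4(u,v), each written as two inequalities. *)
Inductive tvar := Alpha (x y : point) | Beta (x y : point) | Slack (x y : point) (k : nat).
Inductive tcstr :=
| PosAlpha (x y : point) | PosBeta (x y : point)
| SlackUp (x y : point) (k : nat) | SlackLo (x y : point) (k : nat)
| MargULe (x : point) | MargUGe (x : point) | MargVLe (y : point) | MargVGe (y : point).

Definition ind {T} (a b : T) : R := if dec a b then 1 else 0.

Definition tmat (i : tcstr) (j : tvar) : R :=
  match i, j with
  | PosAlpha x y, Alpha x' y' => - (ind x x' * ind y y')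
  | PosBeta x y, Beta x' y' => - (ind x x' * ind y y')
  | SlackUp x y k, Alpha x' y' => ind x x' * ind y y' * x k
  | SlackUp x y k, Beta x' y' => - (ind x x' * ind y y' * y k)
  | SlackUp x y k, Slack x' y' k' => - (ind x x' * ind y y' * ind k k')
  | SlackLo x y k, Alpha x' y' => - (ind x x' * ind y y' * x k)
  | SlackLo x y k, Beta x' y' => ind x x' * ind y y' * y k
  | SlackLo x y k, Slack x' y' k' => - (ind x x' * ind y y' * ind k k')
  | MargULe x, Alpha x' _ => ind x x'
  | MargUGe x, Alpha x' _ => - ind x x'
  | MargVLe y, Beta _ y' => ind y y'
  | MargVGe y, Beta _ y' => - ind y y'
  | _, _ => 0
  end.

Definition tbound (u v : point -> R) (i : tcstr) : R :=
  match i with MargULe x => u x | MargUGe x => - u x | MargVLe y => v y | MargVGe y => - v y | _ => 0 end.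

Definition tcost (j : tvar) : R := match j with Slack _ _ _ => 1 | _ => 0 end.

Ltac pick l a :=
  rewrite (lsum_pick l a) by first [assumption | apply seq_NoDup | apply in_seq; lia | vanish].

Ltac drop_zero_terms :=
  repeat first [setoid_rewrite Rmult_0_l | setoid_rewrite Rmult_0_r]; rewrite ?lsum_0.

Section TransportProgram.
Variables (n : nat) (U V : list point).
Hypothesis NDU : NoDup U.
Hypothesis NDV : NoDup V.

Definition tvars : list tvar :=
  flat_map (fun x => map (Alpha x) V) U ++ flat_map (fun x => map (Beta x) V) U ++
  flat_map (fun x => flat_map (fun y => map (Slack x y) (seq 0 n)) V) U.

Definition tcstrs : list tcstr :=
  flat_map (fun x => map (PosAlpha x) V) U ++ flat_map (fun x => map (PosBeta x) V) U ++
  flat_map (fun x => flat_map (fun y => map (SlackUp x y) (seq 0 n)) V) U ++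
  flat_map (fun x => flat_map (fun y => map (SlackLo x y) (seq 0 n)) V) U ++
  map MargULe U ++ map MargUGe U ++ map MargVLe V ++ map MargVGe V.

Ltac in_list_tac :=
  repeat (apply in_flat_map; eexists; split; [eassumption|]);
  apply in_map; first [assumption | apply in_seq; lia].

Ltac membership_tac :=
  split;
  [ intros H; unpack_in; try discriminate;
    match goal with E : _ = _ |- _ => injection E; intros; subst end;
    rewrite ?in_seq in *; repeat split; auto; lia
  | intros H; decompose [and] H; rewrite !in_app_iff;
    repeat first [left; solve [in_list_tac] | right]; in_list_tac ].

Lemma in_tvars j : In j tvars <->
  match j with
  | Alpha x y | Beta x y => In x U /\ In y V
  | Slack x y k => In x U /\ In y V /\ (k < n)%nat
  end.
Proof. unfold tvars. destruct j; membership_tac. Qed.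

Lemma in_tcstrs i : In i tcstrs <->
  match i with
  | PosAlpha x y | PosBeta x y => In x U /\ In y V
  | SlackUp x y k | SlackLo x y k => In x U /\ In y V /\ (k < n)%nat
  | MargULe x | MargUGe x => In x U
  | MargVLe y | MargVGe y => In y V
  end.
Proof. unfold tcstrs. destruct i; membership_tac. Qed.

Lemma NoDup_tvars : NoDup tvars.
Proof. unfold tvars. solve_nodup. Qed.

Lemma NoDup_tcstrs : NoDup tcstrs.
Proof. unfold tcstrs. solve_nodup. Qed.

Lemma lsum_tvars (f : tvar -> R) : lsum tvars f =
  lsum U (fun x => lsum V (fun y => f (Alpha x y))) + lsum U (fun x => lsum V (fun y => f (Beta x y))) +
  lsum U (fun x => lsum V (fun y => lsum (seq 0 n) (fun k => f (Slack x y k)))).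
Proof.
  unfold tvars. rewrite !lsum_app, !lsum_flat_map. setoid_rewrite lsum_flat_map.
  setoid_rewrite lsum_map. ring.
Qed.

Lemma lsum_tcstrs (f : tcstr -> R) : lsum tcstrs f =
  lsum U (fun x => lsum V (fun y => f (PosAlpha x y))) +
  lsum U (fun x => lsum V (fun y => f (PosBeta x y))) +
  lsum U (fun x => lsum V (fun y => lsum (seq 0 n) (fun k => f (SlackUp x y k)))) +
  lsum U (fun x => lsum V (fun y => lsum (seq 0 n) (fun k => f (SlackLo x y k)))) +
  lsum U (fun x => f (MargULe x)) + lsum U (fun x => f (MargUGe x)) +
  lsum V (fun y => f (MargVLe y)) + lsum V (fun y => f (MargVGe y)).
Proof.
  unfold tcstrs. rewrite !lsum_app, !lsum_flat_map. setoid_rewrite lsum_flat_map.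
  setoid_rewrite lsum_map. ring.
Qed.

Lemma trow_spec i xv : In i tcstrs ->
  row tvars tmat i xv =
  match i with
  | PosAlpha x y => - xv (Alpha x y)
  | PosBeta x y => - xv (Beta x y)
  | SlackUp x y k => xv (Alpha x y) * x k - xv (Beta x y) * y k - xv (Slack x y k)
  | SlackLo x y k => - xv (Alpha x y) * x k + xv (Beta x y) * y k - xv (Slack x y k)
  | MargULe x => lsum V (fun y => xv (Alpha x y))
  | MargUGe x => - lsum V (fun y => xv (Alpha x y))
  | MargVLe y => lsum U (fun x => xv (Beta x y))
  | MargVGe y => - lsum U (fun x => xv (Beta x y))
  end.
Proof.
  rewrite in_tcstrs. unfold row. rewrite lsum_tvars.
  destruct i as [x y|x y|x y k|x y k|x|x|y|y]; intros Hi; decompose [and] Hi;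
    cbn [tmat]; unfold ind; drop_zero_terms.
  (* In the rows [MargVLe], [MargVGe] the picked index [y] is the inner one: swap first. *)
  all: let finish := repeat first [pick U x | pick V y | pick (seq 0 n) k];
    rewrite ?dec_refl; try setoid_rewrite Ropp_mult_distr_l_reverse; try setoid_rewrite Rmult_1_l;
    rewrite ?lsum_opp; ring in
    first [finish | rewrite lsum_swap with (l1 := U); finish].
Qed.

(* The columns of the transport program, in terms of the dual weights
   [Lambda k = yv (SlackUp x y k) - yv (SlackLo x y k)] on the coordinates. *)
Lemma tcol_spec j yv : In j tvars ->
  col tcstrs tmat j yv =
  match j with
  | Alpha x y => - yv (PosAlpha x y) + lin n (fun k => yv (SlackUp x y k) - yv (SlackLo x y k)) x
                 + yv (MargULe x) - yv (MargUGe x)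
  | Beta x y => - yv (PosBeta x y) - lin n (fun k => yv (SlackUp x y k) - yv (SlackLo x y k)) y
                + yv (MargVLe y) - yv (MargVGe y)
  | Slack x y k => - yv (SlackUp x y k) - yv (SlackLo x y k)
  end.
Proof.
  rewrite in_tvars. unfold col, lin. rewrite lsum_tcstrs.
  destruct j as [x y|x y|x y k]; intros Hj; decompose [and] Hj;
    cbn [tmat]; unfold ind; drop_zero_terms; rewrite ?rsum_lsum.
  all: repeat first [pick U x | pick V y | pick (seq 0 n) k].
  all: rewrite ?dec_refl; repeat setoid_rewrite Rmult_1_l; try setoid_rewrite Rmult_minus_distr_r;
    rewrite ?lsum_minus; try setoid_rewrite <- Ropp_mult_distr_r; rewrite ?lsum_opp; ring.
Qed.
End TransportProgram.

(* Extension step of the dual: if linear forms [Lambda x y] with coefficients in [-1, 1]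
   separate lower bounds [phi] on [U] from upper bounds [psi] on [V], then so does a single
   function of [lip_hom], namely  p |-> max_(x in U) min_(y in V) Lambda x y . p. *)
Lemma maxmin_extension n (U V : list point) (x0 y0 : point) (Lambda : point -> point -> nat -> R)
    (phi psi : point -> R) :
  In x0 U -> In y0 V ->
  (forall x y k, In x U -> In y V -> (k < n)%nat -> Rabs (Lambda x y k) <= 1) ->
  (forall x y, In x U -> In y V -> phi x <= lin n (Lambda x y) x /\ lin n (Lambda x y) y <= psi y) ->
  exists f, lip_hom n f /\ (forall x, In x U -> phi x <= f x) /\ (forall y, In y V -> f y <= psi y).
Proof.
  intros Hx0 Hy0 Hbound Hsep.
  assert (HU : forall a, In a (x0 :: U) -> In a U) by (intros a [<-|Ha]; auto).
  assert (HV : forall b, In b (y0 :: V) -> In b V) by (intros b [<-|Hb]; auto).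
  set (G := fun x => lmin (fun y => lin n (Lambda x y)) y0 V).
  exists (lmax G x0 U). split; [|split].
  - apply lip_hom_lmax. intros a Ha. apply lip_hom_lmin. intros b Hb.
    apply lip_hom_lin. intros k Hk. apply Hbound; auto.
  - intros x Hx. eapply Rle_trans; [|apply lmax_ge, Hx].
    apply lmin_ge. intros b Hb. apply Hsep; auto.
  - intros y Hy. apply lmax_le. intros a Ha.
    eapply Rle_trans; [apply lmin_le, Hy|]. apply Hsep; auto.
Qed.

Lemma fin_prob_nonempty n U u : fin_prob n U u -> exists x0, In x0 U.
Proof.
  intros [_ [_ Hsum]]. destruct U as [|x0 U]; [rewrite lsum_nil in Hsum; lra|].
  exists x0; left; auto.
Qed.

Section TransportDuality.
Variables (n : nat) (U V : list point) (u v : point -> R).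
Hypothesis HU : fin_prob n U u.
Hypothesis HV : fin_prob n V v.

Definition tprimal (xv : tvar -> R) : Prop := pfeas (tvars n U V) (tcstrs n U V) tmat (tbound u v) xv.
Definition tdual (yv : tcstr -> R) : Prop := dfeas (tvars n U V) (tcstrs n U V) tmat tcost yv.

Lemma product_plan_feasible :
  tprimal (fun j => match j with
                    | Alpha x y | Beta x y => u x * v y
                    | Slack x y k => Rabs (u x * v y * x k - u x * v y * y k)
                    end).
Proof.
  pose proof HU as [NDU [Hpos_u Hsum_u]]. pose proof HV as [NDV [Hpos_v Hsum_v]].
  intros i Hi. rewrite trow_spec by auto. apply in_tcstrs in Hi.
  assert (Hprod : forall x y, In x U -> In y V -> 0 <= u x * v y).
  { intros x y Hx Hy. apply Rmult_le_pos; left; [apply Hpos_u | apply Hpos_v]; auto. }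
  destruct i as [x y|x y|x y k|x y k|x|x|y|y]; cbn [tbound].
  - pose proof (Hprod x y (proj1 Hi) (proj2 Hi)). lra.
  - pose proof (Hprod x y (proj1 Hi) (proj2 Hi)). lra.
  - pose proof (Rle_abs (u x * v y * x k - u x * v y * y k)). lra.
  - pose proof (Rle_abs (- (u x * v y * x k - u x * v y * y k))). rewrite Rabs_Ropp in H. lra.
  - rewrite lsum_scal, Hsum_v. lra.
  - rewrite lsum_scal, Hsum_v. lra.
  - rewrite (lsum_ext U _ (fun x => v y * u x)), lsum_scal, Hsum_u by (intros; ring). lra.
  - rewrite (lsum_ext U _ (fun x => v y * u x)), lsum_scal, Hsum_u by (intros; ring). lra.
Qed.

Lemma simple_dual_feasible :
  tdual (fun i => match i with SlackUp _ _ _ | MargUGe _ | MargVLe _ => 1 | _ => 0 end).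
Proof.
  pose proof HU as [NDU [Hin_u _]]. pose proof HV as [NDV [Hin_v _]].
  split; [intros i _; destruct i; lra|].
  intros j Hj. rewrite tcol_spec by auto. apply in_tvars in Hj.
  assert (Hmass : forall p, inX n p -> lin n (fun _ => 1 - 0) p = 1).
  { intros p [_ [_ Hp]]. transitivity (rsum n p); [|exact Hp].
    unfold lin. rewrite !rsum_lsum. apply lsum_ext; intros; ring. }
  destruct j as [x y|x y|x y k]; cbn [tcost].
  - rewrite Hmass by (apply Hin_u, Hj). ring.
  - rewrite Hmass by (apply Hin_v, Hj). ring.
  - ring.
Qed.

Lemma plan_of_primal xv : tprimal xv ->
  M4 U V u v (fun x y => xv (Alpha x y)) (fun x y => xv (Beta x y)).
Proof.
  pose proof HU as [NDU _]. pose proof HV as [NDV _].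
  intros Hp.
  assert (Hrow : forall i, In i (tcstrs n U V) -> row (tvars n U V) tmat i xv <= tbound u v i) by exact Hp.
  split; [|split].
  - intros x y Hx Hy.
    pose proof (Hrow (PosAlpha x y) ltac:(apply in_tcstrs; auto)) as Ha.
    pose proof (Hrow (PosBeta x y) ltac:(apply in_tcstrs; auto)) as Hb.
    rewrite trow_spec in Ha, Hb by (auto; apply in_tcstrs; auto). cbn [tbound] in Ha, Hb. lra.
  - intros x Hx.
    pose proof (Hrow (MargULe x) ltac:(apply in_tcstrs; auto)) as Hle.
    pose proof (Hrow (MargUGe x) ltac:(apply in_tcstrs; auto)) as Hge.
    rewrite trow_spec in Hle, Hge by (auto; apply in_tcstrs; auto). cbn [tbound] in Hle, Hge. lra.
  - intros y Hy.
    pose proof (Hrow (MargVLe y) ltac:(apply in_tcstrs; auto)) as Hle.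
    pose proof (Hrow (MargVGe y) ltac:(apply in_tcstrs; auto)) as Hge.
    rewrite trow_spec in Hle, Hge by (auto; apply in_tcstrs; auto). cbn [tbound] in Hle, Hge. lra.
Qed.

Lemma cost_le_objective xv : tprimal xv ->
  cost n U V (fun x y => xv (Alpha x y)) (fun x y => xv (Beta x y)) <= cobj (tvars n U V) tcost xv.
Proof.
  pose proof HU as [NDU _]. pose proof HV as [NDV _].
  intros Hp.
  assert (Hrow : forall i, In i (tcstrs n U V) -> row (tvars n U V) tmat i xv <= tbound u v i) by exact Hp.
  unfold cobj. rewrite lsum_tvars. cbn [tcost]. drop_zero_terms. setoid_rewrite Rmult_1_l.
  unfold cost. rewrite !Rplus_0_l. apply lsum_le; intros x Hx. apply lsum_le; intros y Hy.
  unfold l1. rewrite rsum_lsum. apply lsum_le. intros k Hk. apply in_seq in Hk.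
  pose proof (Hrow (SlackUp x y k) ltac:(apply in_tcstrs; repeat split; auto; lia)) as Hup.
  pose proof (Hrow (SlackLo x y k) ltac:(apply in_tcstrs; repeat split; auto; lia)) as Hlo.
  rewrite trow_spec in Hup, Hlo by (auto; apply in_tcstrs; repeat split; auto; lia).
  cbn [tbound] in Hup, Hlo. apply Rabs_le. lra.
Qed.

(* A dual solution yields a test function of [lip_hom] whose integral gap is at least the
   dual objective: the weights [Lambda] come from the slack constraints and the potentials
   [phi], [psi] from the marginal constraints. *)
Lemma test_function_of_dual yv : tdual yv ->
  exists f, lip_hom n f /\ - bobj (tcstrs n U V) (tbound u v) yv <= integ U u f - integ V v f.
Proof.
  pose proof HU as [NDU [Hpos_u _]]. pose proof HV as [NDV [Hpos_v _]].
  intros [Hnonneg Hcol].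
  destruct (fin_prob_nonempty n U u HU) as [x0 Hx0].
  destruct (fin_prob_nonempty n V v HV) as [y0 Hy0].
  set (Lambda := fun x y k => yv (SlackUp x y k) - yv (SlackLo x y k)).
  set (phi := fun x => yv (MargUGe x) - yv (MargULe x)).
  set (psi := fun y => yv (MargVLe y) - yv (MargVGe y)).
  assert (Hcol' : forall j, In j (tvars n U V) -> col (tcstrs n U V) tmat j yv + tcost j = 0)
    by exact Hcol.
  destruct (maxmin_extension n U V x0 y0 Lambda phi psi Hx0 Hy0) as [f [Hf [Hlow Hhigh]]].
  - intros x y k Hx Hy Hk.
    assert (Hj : In (Slack x y k) (tvars n U V)) by (apply in_tvars; auto).
    pose proof (Hcol' _ Hj) as H. rewrite tcol_spec in H by auto. cbn [tcost] in H.
    pose proof (Hnonneg (SlackUp x y k) ltac:(apply in_tcstrs; auto)).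
    pose proof (Hnonneg (SlackLo x y k) ltac:(apply in_tcstrs; auto)).
    unfold Lambda. apply Rabs_le. lra.
  - intros x y Hx Hy.
    assert (Ha : In (Alpha x y) (tvars n U V)) by (apply in_tvars; auto).
    assert (Hb : In (Beta x y) (tvars n U V)) by (apply in_tvars; auto).
    pose proof (Hcol' _ Ha) as HA. pose proof (Hcol' _ Hb) as HB.
    rewrite tcol_spec in HA, HB by auto. cbn [tcost] in HA, HB.
    pose proof (Hnonneg (PosAlpha x y) ltac:(apply in_tcstrs; auto)).
    pose proof (Hnonneg (PosBeta x y) ltac:(apply in_tcstrs; auto)).
    unfold phi, psi, Lambda. lra.
  - exists f. split; [exact Hf|].
    assert (Hobj : bobj (tcstrs n U V) (tbound u v) yv =
                   lsum V (fun y => v y * psi y) - lsum U (fun x => u x * phi x)).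
    { unfold bobj. rewrite lsum_tcstrs. cbn [tbound]. drop_zero_terms.
      unfold phi, psi.
      setoid_rewrite Rmult_minus_distr_l. setoid_rewrite Ropp_mult_distr_l_reverse.
      rewrite !lsum_minus, !lsum_opp. ring. }
    rewrite Hobj. unfold integ.
    assert (lsum U (fun x => u x * phi x) <= lsum U (fun x => u x * f x)).
    { apply lsum_le. intros x Hx. apply Rmult_le_compat_l; [left; apply Hpos_u | apply Hlow]; auto. }
    assert (lsum V (fun y => v y * f y) <= lsum V (fun y => v y * psi y)).
    { apply lsum_le. intros y Hy. apply Rmult_le_compat_l; [left; apply Hpos_v | apply Hhigh]; auto. }
    lra.
Qed.

Lemma optimal_pair_and_test_function : exists alpha beta f,
  M4 U V u v alpha beta /\ lip_hom n f /\ cost n U V alpha beta <= integ U u f - integ V v f.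
Proof.
  pose proof HU as [NDU _]. pose proof HV as [NDV _].
  destruct (strong_lp (tvars n U V) (tcstrs n U V) tmat (tbound u v) tcost
              (NoDup_tvars n U V NDU NDV) (NoDup_tcstrs n U V NDU NDV) _ _
              product_plan_feasible simple_dual_feasible) as [xv [yv [Hp [Hd Hgap]]]].
  destruct (test_function_of_dual yv Hd) as [f [Hf Hint]].
  exists (fun x y => xv (Alpha x y)), (fun x y => xv (Beta x y)), f.
  split; [apply plan_of_primal, Hp | split; [exact Hf|]].
  pose proof (cost_le_objective xv Hp). lra.
Qed.
End TransportDuality.

Theorem theorem2 (n : nat) (U V : list point) (u v : point -> R) :
  (0 < n)%nat ->
  fin_prob n U u -> fin_prob n V v ->
  exists m : R,
    dstar_is n U V u v m /\
    (exists alpha beta, M4 U V u v alpha beta /\ cost n U V alpha beta = m) /\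
    (forall alpha beta, M4 U V u v alpha beta -> m <= cost n U V alpha beta).
Proof.
  intros _ HU HV.
  assert (HUX : forall x, In x U -> inX n x) by (intros x Hx; apply HU, Hx).
  assert (HVX : forall y, In y V -> inX n y) by (intros y Hy; apply HV, Hy).
  destruct (optimal_pair_and_test_function n U V u v HU HV) as [alpha [beta [f [HM [Hf Hcost]]]]].
  assert (Hgap : cost n U V alpha beta <= Rabs (integ U u f - integ V v f))
    by (eapply Rle_trans; [exact Hcost | apply Rle_abs]).
  exists (cost n U V alpha beta). split; [split|split].
  - intros r [g [Hg ->]]. apply transport_bound; auto.
  - intros m Hm. eapply Rle_trans; [exact Hgap|]. apply Hm. exists f. split; auto. apply lip_hom_D1, Hf.
  - exists alpha, beta. auto.
  - intros alpha' beta' HM'. eapply Rle_trans; [exact Hgap|].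
    apply transport_bound; auto. apply lip_hom_D1, Hf.
Qed.
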